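(* There exist an absolute constant $c>0$, a calibrated distribution $\mathcal D$ of $(p,y)\in[0,1]\times\{0,1\}$, and a decision task $Z=(A,U)$ with $U:A\times\{0,1\}\to[0,1]$ such that for every positive integer $T$ and every randomized response function $r:[0,1]\to\Delta(A)$, if $S$ is the uniform distribution on $T$ i.i.d. data points drawn from $\mathcal D$, then with probability at least $1/3$ over $S$, $\mathsf{SR}_Z(r,S)\ge c\,T^{-1/2}$.
   Context: A distribution of $(p,y)$ is calibrated if $\mathbb E[y\mid p]=p$. A decision task $Z=(A,U)$ consists of an action set $A$ and a utility function $U:A\times\{0,1\}\to[0,1]$. For a randomized response function $r:[0,1]\to\Delta(A)$ and a distribution $\mathcal D$ on $[0,1]\times\{0,1\}$, the swap regret is $\mathsf{SR}_Z(r,\mathcal D)=\sup_{\sigma:A\to A}\mathbb E_{(p,y)\sim\mathcal D,\,a\sim r(p)}[U(\sigma(a),y)-U(a,y)]$. *)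

From HB Require Import structures.
From mathcomp Require Import all_boot all_order all_algebra.
From mathcomp Require Import reals.
Set Implicit Arguments. Unset Strict Implicit. Unset Printing Implicit Defensive.
Import Order.TTheory GRing.Theory Num.Theory.
Local Open Scope ring_scope.

(* A finitely supported distribution on [0,1] x {0,1}:
   atoms fd_pt i = (p_i, y_i) with weights fd_w i. *)
Record findist (R : realType) := FinDist {
  fd_n : nat;
  fd_pt : 'I_fd_n -> R * bool;
  fd_w : 'I_fd_n -> R }.
Arguments fd_n {R}. Arguments fd_pt {R}. Arguments fd_w {R}.

Definition is_dist (R : realType) (D : findist R) : Prop :=
  (forall i, 0 <= fd_w D i) /\ \sum_i fd_w D i = 1 /\
  (forall i, 0 <= (fd_pt D i).1 <= 1).

(* E[y | p = q] = q for every q (trivial when q has zero mass). *)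
Definition calibrated (R : realType) (D : findist R) : Prop :=
  forall q : R,
    \sum_(i | (fd_pt D i).1 == q) fd_w D i * ((fd_pt D i).2)%:R
    = q * \sum_(i | (fd_pt D i).1 == q) fd_w D i.

Definition is_pvec (R : realType) (A : finType) (v : {ffun A -> R}) : Prop :=
  (forall a, 0 <= v a) /\ \sum_a v a = 1.

Definition swap_regret (R : realType) (A : finType) (U : A -> bool -> R)
    (r : R -> {ffun A -> R}) (T : nat) (s : 'I_T -> R * bool) : R :=
  \big[Num.max/0]_(sigma : {ffun A -> A})
    ((T%:R)^-1 * \sum_(t < T) \sum_(a : A)
        r (s t).1 a * (U (sigma a) (s t).2 - U a (s t).2)).

Definition sample_prob (R : realType) (D : findist R) (T : nat)
    (E : ('I_T -> R * bool) -> bool) : R :=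
  \sum_(k : {ffun 'I_T -> 'I_(fd_n D)})
     (\prod_(t < T) fd_w D (k t)) * (E (fun t => fd_pt D (k t)))%:R.
Arguments sample_prob {R} D T E.
Arguments swap_regret {R A} U r {T} s.

From mathcomp Require Import all_boot all_order all_algebra.
From mathcomp Require Import reals.
From mathcomp Require Import zify ring lra.
Set Implicit Arguments.
Unset Strict Implicit.
Unset Printing Implicit Defensive.
Import Order.TTheory GRing.Theory Num.Theory.

(* Let p = 1/2 always and y be a fair coin, which is calibrated, and give the
   four actions the values 5/16, 7/16, 9/16, 11/16 under the Brier utility.
   Swapping a to b then changes the average utility by
   (v_b - v_a)(2j - T(v_a + v_b)) / 2T, where j is the number of ones.
   Whatever r is, some action a gets weight >= 1/4 at p = 1/2.  For an outer
   action the inward swap gains a constant as soon as j is on the right side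
   of T/2, which happens with probability >= 1/2.  For a middle action the
   midpoint is 1/2, so a gain of order K/T needs |2j - T| >= K ~ sqrt T / 10
   on the right side.  The central binomial coefficient is at most
   2^T / sqrt(3T/2 + 1), so the window |2j - T| < K has probability <= 1/3,
   and by symmetry each tail has probability >= 1/3. *)

Definition binom_mass (T : nat) (P : pred nat) : nat :=
  \sum_(j < T.+1) 'C(T, j) * P j.

Lemma binom_mass_predT T : binom_mass T predT = 2 ^ T.
Proof.
rewrite -[2]/(1 + 1) expnDn; apply: eq_bigr => j _.
by rewrite !exp1n !muln1.
Qed.

Lemma eq_binom_mass T (P Q : pred nat) :
  (forall j, j <= T -> P j = Q j) -> binom_mass T P = binom_mass T Q.
Proof. by move=> PQ; apply: eq_bigr => j _; rewrite PQ // -ltnS. Qed.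

Lemma leq_binom_mass T (P Q : pred nat) :
  subpred P Q -> binom_mass T P <= binom_mass T Q.
Proof.
move=> PQ; apply: leq_sum => j _; apply: leq_mul => //.
by case: (P j) (PQ j) => [->|].
Qed.

Lemma binom_massU T (P Q : pred nat) :
  binom_mass T (predU P Q) <= binom_mass T P + binom_mass T Q.
Proof.
rewrite -big_split; apply: leq_sum => j _ /=; rewrite -mulnDr.
by apply: leq_mul => //; case: (P j); case: (Q j).
Qed.

Lemma binom_mass_rev T (P : pred nat) :
  binom_mass T (fun j => P (T - j)) = binom_mass T P.
Proof.
rewrite /binom_mass (reindex_inj rev_ord_inj) /=; apply: eq_bigr => j _.
have le_jT : j <= T by rewrite -ltnS.
by rewrite subSS subKn // bin_sub.
Qed.

Lemma leq_bin_succ n j : j.*2 < n -> 'C(n, j) <= 'C(n, j.+1).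
Proof.
move=> lt_jn; rewrite -(leq_pmul2l (ltn0Sn j)) mul_bin_left.
by rewrite leq_mul2r; apply/orP; right; lia.
Qed.

Lemma leq_bin_half n j : 'C(n, j) <= 'C(n, n./2).
Proof.
wlog le_j_half : j / j <= n./2.
  move=> W; case: (leqP j n./2) => [|lt_half_j]; first exact: W.
  case: (leqP j n) => [le_jn|/bin_small-> //].
  by rewrite -bin_sub //; apply: W; lia.
have [k le_k ->] : exists2 k, k <= n./2 & j = n./2 - k by exists (n./2 - j); lia.
elim: k le_k => [|k IHk] le_k; first by rewrite subn0.
apply: leq_trans (IHk (ltnW le_k)).
have -> : n./2 - k = (n./2 - k.+1).+1 by lia.
apply: leq_bin_succ; lia.
Qed.

Lemma mul_bin_double_succ m :
  'C(m.+1.*2, m.+1) * m.+1 = 2 * m.*2.+1 * 'C(m.*2, m).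
Proof.
have := mul_bin_diag m.+1.*2 m; have := mul_bin_down m.*2.+1 m.
rewrite doubleS /= (_ : m.*2.+1 - m = m.+1); last by lia.
set a := 'C(_, m); set b := 'C(_, m.+1); set c := 'C(_, m); nia.
Qed.

Lemma central_bin_sqr m : 'C(m.*2, m) ^ 2 * (3 * m + 1) <= 16 ^ m.
Proof.
elim: m => [|m IHm] //.
have rec := mul_bin_double_succ m.
set a := 'C(m.*2, m) in IHm rec; set b := 'C(m.+1.*2, m.+1) in rec *.
have cubic : 4 * m.*2.+1 ^ 2 * (3 * m + 4) <= 16 * (m.+1 ^ 2 * (3 * m + 1)) by nia.
rewrite -(leq_pmul2r (_ : 0 < m.+1 ^ 2 * (3 * m + 1))); last by nia.
have -> : b ^ 2 * (3 * m.+1 + 1) * (m.+1 ^ 2 * (3 * m + 1))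
          = 4 * m.*2.+1 ^ 2 * (3 * m + 4) * (a ^ 2 * (3 * m + 1)).
  have -> : b ^ 2 * (3 * m.+1 + 1) * (m.+1 ^ 2 * (3 * m + 1))
            = (b * m.+1) ^ 2 * (3 * m + 4) * (3 * m + 1) by ring.
  rewrite rec; ring.
apply: leq_trans (leq_mul cubic IHm) _.
by rewrite (expnS 16 m) [leqLHS]mulnAC.
Qed.

Lemma bin_half_sqr T : 'C(T, T./2) ^ 2 * (3 * T./2 + 1) <= 4 ^ T.
Proof.
have := odd_double_half T; set m := T./2 => <-.
have even_case : 'C(m.*2, m) ^ 2 * (3 * m + 1) <= 4 ^ m.*2.
  by rewrite (_ : 4 ^ m.*2 = 16 ^ m) ?central_bin_sqr // -mul2n expnM.
case: (odd T); rewrite ?add0n ?add1n //.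
have le_odd : 'C(m.*2.+1, m) <= 2 * 'C(m.*2, m).
  rewrite -(leq_pmul2l (ltn0Sn m)); have := mul_bin_down m.*2.+1 m.
  rewrite /= (_ : m.*2.+1 - m = m.+1); last by lia.
  by move=> <-; rewrite mulnA leq_mul2r; apply/orP; right; lia.
apply: leq_trans (_ : (2 * 'C(m.*2, m)) ^ 2 * (3 * m + 1) <= _).
  by rewrite leq_mul2r leq_sqr le_odd orbT.
by rewrite expnMn -mulnA (expnS 4) leq_mul.
Qed.

Lemma sum_window_indicator N lo K :
  \sum_(j < N) (lo <= j < lo + K) = minn N (lo + K) - minn N lo.
Proof.
elim: N => [|N IHN]; first by rewrite big_ord0; lia.
rewrite big_ord_recr /= IHN.
by case: (leqP lo N); case: (ltnP N (lo + K)); rewrite /=; lia.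
Qed.

Lemma binom_mass_window T K :
  binom_mass T (fun j => (T < j.*2 + K) && (j.*2 < T + K)) <= K * 'C(T, T./2).
Proof.
set lo := (T + 1 - K)./2.
apply: (@leq_trans (\sum_(j < T.+1) 'C(T, T./2) * (lo <= j < lo + K))).
  apply: leq_sum => j _; case/boolP: ((T < j.*2 + K) && (j.*2 < T + K)) => [/andP[? ?]|];
    last by rewrite muln0.
  rewrite (_ : lo <= j < lo + K) ?muln1 ?leq_bin_half //.
  by apply/andP; split; lia.
by rewrite -big_distrr sum_window_indicator mulnC leq_mul //; lia.
Qed.

(* For T = 2, 4 and K = 1 the window has mass 1/2 and 3/8. *)
Lemma binom_mass_window_small T K :
  0 < T -> 0 < K -> 100 * (K - 1) ^ 2 <= T -> T != 2 -> T != 4 ->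
  3 * binom_mass T (fun j => (T < j.*2 + K) && (j.*2 < T + K)) <= 2 ^ T.
Proof.
move=> T_gt0 K_gt0 K_le T_neq2 T_neq4.
case/boolP: (odd T && (K == 1)) => [/andP[odd_T /eqP K1]|not_odd_K1].
  rewrite /binom_mass big1 // => j _.
  by rewrite (_ : (T < j.*2 + K) && (j.*2 < T + K) = false) ?muln0 //; apply/negP; lia.
have K_sq : 9 * K ^ 2 <= 3 * T./2 + 1 by nia.
rewrite -leq_sqr (_ : (2 ^ T) ^ 2 = 4 ^ T); last by rewrite -expnM mulnC expnM.
apply: leq_trans (_ : (3 * (K * 'C(T, T./2))) ^ 2 <= _).
  by rewrite leq_sqr leq_mul2l binom_mass_window orbT.
apply: leq_trans (bin_half_sqr T).
by rewrite mulnA expnMn mulnC leq_mul2l expnMn K_sq orbT.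
Qed.

Lemma binom_mass_half T : 2 ^ T <= 2 * binom_mass T (fun j => T <= j.*2).
Proof.
have lower : binom_mass T (fun j => j.*2 <= T) = binom_mass T (fun j => T <= j.*2).
  by rewrite -binom_mass_rev; apply: eq_binom_mass => j le_jT; apply/idP/idP; lia.
rewrite mul2n -addnn -[X in X + _]lower -binom_mass_predT.
apply: leq_trans (binom_massU _ _ _); apply: leq_binom_mass => j _ /=; lia.
Qed.

Lemma binom_mass_upper_tail T K :
  0 < T -> 0 < K -> 100 * (K - 1) ^ 2 <= T -> T != 2 -> T != 4 ->
  2 ^ T <= 3 * binom_mass T (fun j => T + K <= j.*2).
Proof.
move=> T_gt0 K_gt0 K_le T_neq2 T_neq4.
have lower : binom_mass T (fun j => j.*2 + K <= T)
             = binom_mass T (fun j => T + K <= j.*2).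
  by rewrite -binom_mass_rev; apply: eq_binom_mass => j le_jT; apply/idP/idP; lia.
have window := binom_mass_window_small T_gt0 K_gt0 K_le T_neq2 T_neq4.
suff : 2 ^ T <= binom_mass T (fun j => T + K <= j.*2)
         + binom_mass T (fun j => j.*2 + K <= T)
         + binom_mass T (fun j => (T < j.*2 + K) && (j.*2 < T + K)) by lia.
rewrite -binom_mass_predT.
apply: leq_trans (leq_add (binom_massU _ _ _) (leqnn _)).
by apply: leq_trans (binom_massU _ _ _); apply: leq_binom_mass => j _ /=; lia.
Qed.

Lemma exists_window_width T : 0 < T ->
  exists K, [/\ 0 < K, 100 * (K - 1) ^ 2 <= T & T <= 100 * K ^ 2].
Proof.
move=> T_gt0; have ex : exists K, T <= 100 * K ^ 2 by exists T; nia.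
exists (ex_minn ex); case: ex_minnP => K T_le K_min; split => //; first by lia.
rewrite leqNgt; apply/negP => lt_T; have := K_min (K - 1) (ltnW lt_T); lia.
Qed.

(* The numbers j of ones for which action a has a swap gaining at least
   sqrt T / 80 (see swap_gain below): 0 and 3 swap inwards, 1 (resp. 2) swaps
   to 2 (resp. 1) when j exceeds (resp. falls short of) T/2 by K/2, and
   outwards when j is far on the other side; the outward swaps are only
   needed for T = 2, 4. *)
Definition profitable_count (T K : nat) (a : 'I_4) (j : nat) : bool :=
  match val a with
  | 0 => T <= j.*2
  | 1 => (T + K <= j.*2) || (4 * j <= T)
  | 2 => (j.*2 + K <= T) || (3 * T <= 4 * j)
  | _ => j.*2 <= T
  end.

Lemma binom_mass_profitable_count T K (a : 'I_4) :
  0 < T -> 0 < K -> 100 * (K - 1) ^ 2 <= T ->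
  2 ^ T <= 3 * binom_mass T (profitable_count T K a).
Proof.
move=> T_gt0 K_gt0 K_le.
have outer : 2 ^ T <= 3 * binom_mass T (fun j => T <= j.*2).
  by apply: leq_trans (binom_mass_half T) _; rewrite leq_mul2r orbT.
have middle : 2 ^ T <= 3 * binom_mass T (fun j => (T + K <= j.*2) || (4 * j <= T)).
  case/boolP: ((T == 2) || (T == 4)) => [T24|/norP[T_neq2 T_neq4]].
    have K1 : K = 1 by case/orP: T24 => /eqP T_eq; rewrite T_eq in K_le; nia.
    by case/orP: T24 => /eqP->; rewrite K1 /binom_mass !big_ord_recr big_ord0.
  apply: leq_trans (binom_mass_upper_tail T_gt0 K_gt0 K_le T_neq2 T_neq4) _.
  by rewrite leq_mul2l; apply/orP; right; apply: leq_binom_mass => j /= ->.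
case: a => [[|[|[|[|//]]]] lt_a]; rewrite /profitable_count //=.
- rewrite -binom_mass_rev.
  rewrite (eq_binom_mass (Q := fun j => (T + K <= j.*2) || (4 * j <= T))) //.
  by move=> j le_jT; apply/idP/idP; lia.
- rewrite -binom_mass_rev (eq_binom_mass (Q := fun j => T <= j.*2)) //.
  by move=> j le_jT; apply/idP/idP; lia.
Qed.

Local Open Scope ring_scope.

Lemma sum_set_card (I : finType) (V : nmodType) (F : nat -> V) :
  \sum_(B : {set I}) F #|B| = \sum_(j < #|I|.+1) F j *+ 'C(#|I|, j).
Proof.
rewrite (partition_big (fun B : {set I} => inord #|B| : 'I_#|I|.+1) predT) //=.
apply: eq_bigr => j _.
rewrite (eq_bigl (fun B : {set I} => B \in [set B : {set I} | #|B| == j])) => [|B];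
  last first.
  rewrite !inE; apply/eqP/eqP => [<-|->]; last exact: inord_val.
  by rewrite inordK // ltnS max_card.
rewrite (eq_bigr (fun _ => F j)) => [|B]; last by rewrite inE => /eqP->.
by rewrite sumr_const card_draws.
Qed.

Definition ones (T : nat) (k : {ffun 'I_T -> 'I_2}) : nat := #|[set t | k t != ord0]|.

Lemma sum_ffun_ones (V : nmodType) (T : nat) (F : nat -> V) :
  \sum_(k : {ffun 'I_T -> 'I_2}) F (ones k) = \sum_(j < T.+1) F j *+ 'C(T, j).
Proof.
have := sum_set_card 'I_T F; rewrite card_ord => <-.
pose of_set (B : {set 'I_T}) : {ffun 'I_T -> 'I_2} :=
  [ffun t => if t \in B then ord_max else ord0].
rewrite (reindex of_set); last first.
  exists (fun k : {ffun 'I_T -> 'I_2} => [set t | k t != ord0]) => [B _|k _].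
    by apply/setP => t; rewrite inE ffunE; case: (t \in B).
  apply/ffunP => t; rewrite ffunE inE.
  by case: (k t) => [[|[|//]]] ? ; apply: val_inj.
apply: eq_bigr => B _; congr F; apply: eq_card => t.
by rewrite !inE ffunE; case: (t \in B).
Qed.

Lemma swap_regret_ge_swap (R : realType) (A : finType) (U : A -> bool -> R)
    (r : R -> {ffun A -> R}) (T : nat) (s : 'I_T -> R * bool) (a b : A) :
  (T%:R)^-1 * \sum_(t < T) r (s t).1 a * (U b (s t).2 - U a (s t).2)
  <= swap_regret U r s.
Proof.
pose sigma : {ffun A -> A} := [ffun x => if x == a then b else x].
suff -> : \sum_(t < T) r (s t).1 a * (U b (s t).2 - U a (s t).2)
    = \sum_(t < T) \sum_x r (s t).1 x * (U (sigma x) (s t).2 - U x (s t).2).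
  exact: (le_bigmax _ _ sigma).
apply: eq_bigr => t _; rewrite (bigD1 a) //= ffunE eqxx big1 ?addr0 // => x /negbTE x_a.
by rewrite ffunE x_a subrr mulr0.
Qed.

Lemma exists_pvec_ge_inv_card (R : realType) (A : finType) (v : {ffun A -> R}) :
  is_pvec v -> exists a, (#|A|%:R)^-1 <= v a.
Proof.
case=> _ sum_v; case: (pickP A) => [a0 _|A0]; last first.
  by move: sum_v; rewrite big_pred0 // => /eqP; rewrite eq_sym oner_eq0.
exists (Order.arg_max a0 xpredT v); case: arg_maxP => // a _ max_a.
have A_gt0 : (0 < #|A|)%N by apply/card_gt0P; exists a0.
rewrite -[_^-1]mulr1 ler_pdivrMl ?ltr0n // mulr_natl -sum_v -sumr_const.
by apply: ler_sum => x _; exact: max_a.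
Qed.

Section HardInstance.
Variable R : realType.

Definition fair_coin : findist R :=
  FinDist (fun i : 'I_2 => (2^-1, i != ord0)) (fun=> 2^-1).

Lemma fair_coin_dist : is_dist fair_coin.
Proof.
split=> [i|]; first by rewrite /= invr_ge0 ler0n.
by split=> [|i /=]; [rewrite big_ord_recr big_ord1 /=|]; lra.
Qed.

Lemma fair_coin_calibrated : calibrated fair_coin.
Proof.
move=> q /=; case: (eqVneq 2^-1 q) => [<-|ne_q]; last by rewrite !big_pred0_eq mulr0.
by rewrite big_mkcond [in RHS]big_mkcond !big_ord_recr !big_ord0 /=; lra.
Qed.

Lemma sample_prob_fair_coin_ge T (E : ('I_T -> R * bool) -> bool) (P : pred nat) :
  (forall k, P (ones k) -> E (fun t => fd_pt fair_coin (k t))) ->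
  (2 ^ T <= 3 * binom_mass T P)%N -> 1 / 3 <= sample_prob fair_coin T E.
Proof.
move=> PE; rewrite -(ler_nat R) natrM => mass_P.
have pow_gt0 : 0 < (2 ^ T)%:R :> R by rewrite ltr0n expn_gt0.
apply: (@le_trans _ _ ((2 ^ T)%:R^-1 * (binom_mass T P)%:R)).
  by rewrite ler_pdivlMl //; lra.
have -> : (binom_mass T P)%:R = \sum_(k : {ffun 'I_T -> 'I_2}) (P (ones k))%:R :> R.
  rewrite (sum_ffun_ones T (fun j => (P j)%:R)) natr_sum; apply: eq_bigr => j _.
  by rewrite natrM mulrC mulr_natr.
rewrite /sample_prob mulr_sumr; apply: ler_sum => k _.
rewrite prodr_const card_ord /= exprVn natrX ler_wpM2l ?invr_ge0 ?exprn_ge0 ?ler0n //.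
by case: (boolP (P (ones k))) => // /PE ->.
Qed.

Definition value (a : 'I_4) : R := (2 * a%:R + 5) / 16.

(* Brier-score utility:
   brier b y - brier a y = (value b - value a) * (2 y - value a - value b) / 2. *)
Definition brier (a : 'I_4) (y : bool) : R :=
  (1 / 2 + y%:R - (y%:R - value a) ^+ 2) / 2.

Lemma brier_range a y : 0 <= brier a y <= 1.
Proof.
case: a => [[|[|[|[|//]]]] ?]; case: y; apply/andP.
all: by rewrite /brier /value /=; split; lra.
Qed.

Definition swap_gain (T : nat) (a b : 'I_4) (j : nat) : R :=
  (value b - value a) * (2 * j%:R - T%:R * (value a + value b)).

Lemma fair_coin_swap_gain T (r : R -> {ffun 'I_4 -> R}) (k : {ffun 'I_T -> 'I_2}) a b :
  \sum_(t < T) r (fd_pt fair_coin (k t)).1 a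
     * (brier b (fd_pt fair_coin (k t)).2 - brier a (fd_pt fair_coin (k t)).2)
  = r 2^-1 a * (swap_gain T a b (ones k) / 2).
Proof.
have ones_sum : (ones k)%:R = \sum_(t < T) (k t != ord0)%:R :> R.
  rewrite /ones -sum1_card natr_sum big_mkcond /=.
  by apply: eq_bigr => t _; rewrite inE; case: (k t != ord0).
rewrite /= /swap_gain ones_sum -mulr_sumr; congr (_ * _).
rewrite (eq_bigr (fun t => (value b - value a) / 2 * (2 * (k t != ord0)%:R)
                           - (value b - value a) / 2 * (value a + value b))); last first.
  by move=> t _; rewrite /brier; ring.
rewrite sumrB -!mulr_sumr sumr_const card_ord -mulr_natr; ring.
Qed.

Lemma regret_lower_bound T (q Y : R) :
  (0 < T)%N -> 4^-1 <= q -> Num.sqrt T%:R / 80 <= Y ->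
  1 / 640 / Num.sqrt T%:R <= T%:R^-1 * (q * (Y / 2)).
Proof.
move=> T_gt0 q_ge Y_ge.
have T_ge1 : 1 <= T%:R :> R by rewrite ler1n.
set s := Num.sqrt T%:R in Y_ge *.
have s_gt0 : 0 < s by rewrite sqrtr_gt0; lra.
have s_sq : T%:R = s ^+ 2 by rewrite sqr_sqrtr //; lra.
have -> : 1 / 640 / s = (s ^+ 2)^-1 * (1 / 4 * (s / 80 / 2)).
  by field; rewrite gt_eqF.
have Y_ge0 : 0 <= Y by lra.
rewrite s_sq ler_wpM2l ?invr_ge0 ?exprn_ge0 ?(ltW s_gt0) //; nra.
Qed.

Lemma profitable_count_swap_gain T K (a : 'I_4) j :
  (0 < T)%N -> Num.sqrt (T%:R : R) <= 10 * K%:R -> profitable_count T K a j ->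
  exists b, Num.sqrt (T%:R : R) / 80 <= swap_gain T a b j.
Proof.
move=> T_gt0 sqrt_le_K.
have T_ge1 : 1 <= T%:R :> R by rewrite ler1n.
have sqrt_ge1 : 1 <= Num.sqrt T%:R :> R by rewrite -[leLHS]sqrtr1 ler_sqrt ?ler0n.
have sqrt_le_T : Num.sqrt T%:R <= T%:R :> R.
  by rewrite -{2}[T%:R]sqr_sqrtr ?ler0n // expr2; nra.
rewrite /profitable_count /swap_gain /value; case: a => [[|[|[|[|//]]]] lt_a] /=.
- rewrite -mul2n -(ler_nat R) natrM => h.
  by exists (Ordinal (isT : (1 < 4)%N)) => /=; lra.
- case/orP.
    rewrite -mul2n -(ler_nat R) natrM natrD => h.
    by exists (Ordinal (isT : (2 < 4)%N)) => /=; lra.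
  rewrite -(ler_nat R) natrM => h.
  by exists (Ordinal (isT : (0 < 4)%N)) => /=; lra.
- case/orP.
    rewrite -mul2n -(ler_nat R) natrD natrM => h.
    by exists (Ordinal (isT : (1 < 4)%N)) => /=; lra.
  rewrite -(ler_nat R) !natrM => h.
  by exists (Ordinal (isT : (3 < 4)%N)) => /=; lra.
- rewrite -mul2n -(ler_nat R) natrM => h.
  by exists (Ordinal (isT : (2 < 4)%N)) => /=; lra.
Qed.

End HardInstance.

Theorem lemma8p2 (R : realType) :
  exists c : R, 0 < c /\
  exists D : findist R, is_dist D /\ calibrated D /\
  exists (A : finType) (U : A -> bool -> R),
    (0 < #|A|)%N /\ (forall a y, 0 <= U a y <= 1) /\
    forall (T : nat), (0 < T)%N ->
    forall r : R -> {ffun A -> R},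
      (forall p, 0 <= p <= 1 -> is_pvec (r p)) ->
      1 / 3 <= sample_prob D T
                 (fun s => c / Num.sqrt (T%:R) <= swap_regret U r s).
Proof.
exists (1 / 640); split; first by lra.
exists (fair_coin R); split; first exact: fair_coin_dist.
split; first exact: fair_coin_calibrated.
exists 'I_4, (@brier R); split; first by rewrite card_ord.
split=> [|T T_gt0 r r_pvec]; first exact: brier_range.
have /exists_pvec_ge_inv_card[a heavy] : is_pvec (r 2^-1) by apply: r_pvec; lra.
rewrite card_ord in heavy.
have [K [K_gt0 K_le T_le]] := exists_window_width T_gt0.
have sqrt_le_K : Num.sqrt (T%:R : R) <= 10 * K%:R.
  rewrite -[leRHS]ger0_norm ?mulr_ge0 ?ler0n // -sqrtr_sqr ler_sqrt ?sqr_ge0 //.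
  by rewrite -natrM -natrX ler_nat; nia.
apply: sample_prob_fair_coin_ge (binom_mass_profitable_count a T_gt0 K_gt0 K_le).
move=> k profitable.
have [b gain] := profitable_count_swap_gain T_gt0 sqrt_le_K profitable.
apply: le_trans (swap_regret_ge_swap _ _ _ a b).
by rewrite fair_coin_swap_gain; exact: regret_lower_bound.
Qed.
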